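(* Let $G^c$ be a connected vertex-coloured graph with $n$ vertices, $c$ colours and minimum degree $\delta$. Then either $\gamma^t(G^c)=c$ or $$\gamma^t(G^c)<\frac{1+\ln(\delta+1)}{\delta+1}(n-c+1)+c-1.$$
   Context: A vertex-coloured graph $G^c$ with colour set $\{1,\dots,c\}$ is a finite simple graph in which every vertex receives exactly one colour and every colour appears on at least one vertex. A dominating set is tropical if every colour appears on at least one of its vertices; $\gamma^t(G^c)$ is the minimum size of a tropical dominating set. *)

From mathcomp Require Import all_boot.
From Stdlib Require Import Reals.
Set Implicit Arguments. Unset Strict Implicit. Unset Printing Implicit Defensive.

Definition simple_graph (T : finType) (e : rel T) : Prop :=
  symmetric e /\ irreflexive e.

Definition graph_connected (T : finType) (e : rel T) : Prop :=
  forall x y : T, connect e x y.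

Definition degree (T : finType) (e : rel T) (v : T) : nat := #|[set u | e v u]|.

Definition is_min_degree (T : finType) (e : rel T) (delta : nat) : Prop :=
  (exists v : T, degree e v = delta) /\ (forall v : T, delta <= degree e v).

Definition colouring_onto (T : finType) (c : nat) (col : T -> 'I_c) : Prop :=
  forall i : 'I_c, exists v : T, col v = i.

Definition dominating (T : finType) (e : rel T) (D : {set T}) : bool :=
  [forall v, (v \in D) || [exists u in D, e u v]].

Definition tropical (T : finType) (c : nat) (col : T -> 'I_c) (D : {set T}) : bool :=
  [forall i : 'I_c, [exists v in D, col v == i]].

Definition trop_dom (T : finType) (e : rel T) (c : nat) (col : T -> 'I_c)
  (D : {set T}) : bool := dominating e D && tropical col D.

(* minimum size of a tropical dominating set (the whole vertex set is one
   whenever col is onto, so #|T| is a harmless default) *)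
Definition gamma_t (T : finType) (e : rel T) (c : nat) (col : T -> 'I_c) : nat :=
  \big[minn/#|T|]_(D : {set T} | trop_dom e col D) #|D|.

(* Pick one vertex of each colour.  If this transversal dominates, it is a
   tropical dominating set of size c.  Otherwise some vertex u is not dominated
   by it, and exchanging u for the representative of its colour gives a
   transversal S containing u but none of its neighbours.  Add to S a random
   set X of vertices outside S, each chosen independently with probability
   p = ln(delta+1)/(delta+1), and then every vertex still undominated: this is
   a tropical dominating set.  A vertex v can be left undominated only if its
   closed neighbourhood, of size at least delta+1, misses S and X; the former
   happens for at most n - c - delta vertices because the neighbourhood of u
   lies outside S, the latter with probability (1-p)^(delta+1) <= 1/(delta+1).
   So some choice of X gives a set of size at most
   c + p(n-c) + (n-c-delta)/(delta+1), which is the claimed bound minus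
   ln(delta+1)/(delta+1) > 0. *)

From mathcomp Require Import all_boot all_order all_algebra zify.
From mathcomp Require Import Rstruct.
From Stdlib Require Import Reals Lra.
Set Implicit Arguments. Unset Strict Implicit. Unset Printing Implicit Defensive.
Import GRing.Theory Num.Theory Order.TTheory.

Section Averaging.
Local Open Scope ring_scope.

Lemma exists_le_average (R : realDomainType) (I : finType) (w F : I -> R) :
  (forall i, 0 <= w i) -> \sum_i w i = 1 ->
  exists i, F i <= \sum_j w j * F j.
Proof.
move=> w_ge0 w_sum1.
have [I0|[i0 _]] := set_0Vmem [set: I].
  have noI : xpredT =1 (xpred0 : pred I) by move=> i; rewrite -(in_set0 i) -I0 in_setT.
  by move/eqP: w_sum1; rewrite (big_pred0 _ _ _ _ noI) eq_sym oner_eq0.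
have [i _ iminF] := @arg_minP _ _ _ i0 xpredT F isT; exists i.
rewrite -[leLHS]mul1r -w_sum1 mulr_suml.
by apply: ler_sum => j _; apply: ler_wpM2l; [exact: w_ge0 | exact: iminF].
Qed.
End Averaging.

Section ProductWeights.
Local Open Scope ring_scope.
Variable R : numDomainType.

Lemma prodr_nat_forall (I : finType) (g : pred I) :
  \prod_i ((g i)%:R : R) = [forall i, g i]%:R.
Proof.
have [/forallP gT|/forallPn [i /negbTE gi]] := boolP [forall i, g i].
  by rewrite big1 // => i _; rewrite gT.
by rewrite (bigD1 i) //= gi mul0r.
Qed.

Lemma sum_ffun_prod_nat_forall (T : finType) (q : T -> bool -> R)
    (P : T -> bool -> bool) :
  \sum_(f : {ffun T -> bool}) (\prod_v q v (f v)) * [forall v, P v (f v)]%:R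
  = \prod_v (q v true * (P v true)%:R + q v false * (P v false)%:R).
Proof.
rewrite -(eq_bigr _ (fun v _ => big_bool _ (fun b => q v b * (P v b)%:R))).
rewrite bigA_distr_bigA /=; apply: eq_bigr => f _.
by rewrite big_split /= prodr_nat_forall.
Qed.

Variables (T : finType) (W : {set T}) (p : R).

(* Each vertex of [W] is marked independently with probability [p]; the
   vertices outside [W] are never marked. *)
Definition bern_coord (v : T) (b : bool) : R :=
  if v \in W then (if b then p else 1 - p) else (~~ b)%:R.

Definition bern_weight (f : {ffun T -> bool}) : R := \prod_v bern_coord v (f v).

Lemma bern_coord_sum v : bern_coord v true + bern_coord v false = 1.
Proof. by rewrite /bern_coord; case: (v \in W); rewrite ?subrKC ?add0r. Qed.

Lemma sum_bern_weight : \sum_f bern_weight f = 1.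
Proof.
have := sum_ffun_prod_nat_forall bern_coord (fun _ _ => true).
rewrite (eq_bigr bern_weight) => [->|f _]; last first.
  by rewrite (_ : [forall v, _] = true) ?mulr1 //; apply/forallP.
by rewrite big1 // => v _; rewrite !mulr1 bern_coord_sum.
Qed.

Hypothesis p01 : 0 <= p <= 1.

Lemma bern_weight_ge0 f : 0 <= bern_weight f.
Proof.
case/andP: p01 => p0 p1; apply: prodr_ge0 => v _; rewrite /bern_coord.
by case: (v \in W); case: (f v); rewrite ?subr_ge0.
Qed.

Lemma bern_weight_mark v0 :
  \sum_f bern_weight f * (f v0)%:R = (v0 \in W)%:R * p.
Proof.
have := sum_ffun_prod_nat_forall bern_coord (fun v b => (v == v0) ==> b).
have mark f : [forall v, (v == v0) ==> f v] = f v0.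
  apply/forallP/idP => [/(_ v0)|f0 v]; first by rewrite eqxx.
  by apply/implyP => /eqP ->.
rewrite (eq_bigr (fun f => bern_weight f * (f v0)%:R)) => [->|f _]; last first.
  by rewrite mark.
rewrite (bigD1 v0) //= eqxx mulr1 mulr0 addr0 big1 ?mulr1.
  by rewrite /bern_coord; case: (v0 \in W); rewrite ?mul1r ?mul0r.
by move=> v /negbTE ->; rewrite !mulr1 bern_coord_sum.
Qed.

Lemma bern_weight_avoid (S : {set T}) : S \subset W ->
  \sum_f bern_weight f * [forall x in S, ~~ f x]%:R = (1 - p) ^+ #|S|.
Proof.
move=> /subsetP SW.
rewrite (sum_ffun_prod_nat_forall bern_coord (fun v b => (v \in S) ==> ~~ b)).
rewrite (bigID (mem S)) /= [X in _ * X]big1 ?mulr1.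
  rewrite -prodr_const; apply: eq_bigr => v vS.
  by rewrite vS /bern_coord SW // mulr0 mulr1 add0r.
by move=> v /negbTE ->; rewrite !mulr1 bern_coord_sum.
Qed.

End ProductWeights.

Section RandomExtension.
Local Open Scope ring_scope.
Variables (T : finType) (e : rel T).

Definition closed_nbhd (v : T) : {set T} := v |: [set x | e v x].

Definition undominated (S : {set T}) : {set T} :=
  [set v | (v \notin S) && ~~ [exists x in S, e x v]].

Definition far_from (S : {set T}) : {set T} :=
  [set v | [disjoint closed_nbhd v & S]].

Lemma dominating_setU_undominated (S : {set T}) :
  dominating e (S :|: undominated S).
Proof.
apply/forallP => v; rewrite in_setU.
have [//|vNS] := boolP (v \in S).
have [/existsP [x /andP [xS exv]]|noDom] := boolP [exists x in S, e x v].
  by apply/orP; right; apply/existsP; exists x; rewrite in_setU xS exv.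
by rewrite inE vNS noDom.
Qed.

Lemma card_closed_nbhd v : irreflexive e -> #|closed_nbhd v| = (degree e v).+1.
Proof. by move=> e_irr; rewrite cardsU1 inE e_irr. Qed.

Lemma natr_card_sum (R : pzSemiRingType) (A : {pred T}) :
  #|A|%:R = \sum_v (v \in A)%:R :> R.
Proof.
by rewrite -sum1_card natr_sum big_mkcond; apply: eq_bigr => v _; case: (v \in A).
Qed.

Hypothesis e_sym : symmetric e.

Lemma undominated_setU_far (S X : {set T}) v :
  v \in undominated (S :|: X) -> (v \in far_from S) && [disjoint closed_nbhd v & X].
Proof.
rewrite !inE negb_or => /andP [/andP [vNS vNX] /existsPn noDom].
have avoid x : x \in closed_nbhd v -> (x \notin S) && (x \notin X).
  rewrite !inE => /predU1P [-> | evx]; first by rewrite vNS.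
  by have := noDom x; rewrite e_sym evx andbT inE negb_or.
apply/andP; split; rewrite ?inE; apply/pred0P => x /=;
  by apply/negbTE/andP => -[/avoid/andP [xNS xNX] xin]; rewrite xin in xNS xNX.
Qed.

Lemma card_far_from_le (S : {set T}) u :
  u \in S -> (forall s, s \in S -> ~~ e u s) ->
  (#|far_from S| + degree e u <= #|~: S|)%nat.
Proof.
move=> uS uNS; set N := [set x | e u x].
have far_disj : [disjoint far_from S & N].
  apply/pred0P => x /=; rewrite !inE; apply/negbTE/andP => -[/pred0P farx eux].
  by have := farx u; rewrite /= !inE e_sym eux uS orbT.
case: (leq_card_setU (far_from S) N) => _; rewrite far_disj => /eqP <-.
apply/subset_leq_card/subsetP => x; rewrite !inE => /orP [/pred0P farx | eux].
  by apply/negP => xS; have := farx x; rewrite /= !inE eqxx xS.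
by apply/negP => xS; have := uNS x xS; rewrite eux.
Qed.

Lemma exists_small_undominated (R : realDomainType) (S : {set T}) (p : R) :
  0 <= p <= 1 ->
  exists X : {set T},
    (#|X| + #|undominated (S :|: X)|)%:R
      <= #|~: S|%:R * p + \sum_(v in far_from S) (1 - p) ^+ #|closed_nbhd v|.
Proof.
move=> p01; pose w := bern_weight (~: S) p.
pose marked (f : {ffun T -> bool}) := [set v | f v].
pose size f : R := (#|marked f| + #|undominated (S :|: marked f)|)%:R.
pose isolated (f : {ffun T -> bool}) v := [forall x in closed_nbhd v, ~~ f x].
pose bound (f : {ffun T -> bool}) : R :=
  \sum_v (f v)%:R + \sum_(v in far_from S) (isolated f v)%:R.
have size_le_bound f : size f <= bound f.
  rewrite /size natrD natr_card_sum; apply: lerD.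
    by apply: ler_sum => v _; rewrite inE.
  apply: (le_trans (y := #|[set v in far_from S | isolated f v]|%:R)).
    rewrite ler_nat; apply/subset_leq_card/subsetP => v.
    case/undominated_setU_far/andP => farv /pred0P disj; rewrite inE farv.
    apply/forallP => x; apply/implyP => xN.
    by have := disj x; rewrite /= xN inE /= => ->.
  rewrite natr_card_sum [leRHS]big_mkcond; apply: ler_sum => v _.
  by rewrite inE; case: (v \in far_from S).
have expected_bound :
    \sum_f w f * bound f
    = #|~: S|%:R * p + \sum_(v in far_from S) (1 - p) ^+ #|closed_nbhd v|.
  rewrite (eq_bigr (fun f => \sum_v w f * (f v)%:R
      + \sum_(v in far_from S) w f * (isolated f v)%:R)); last first.
    by move=> f _; rewrite mulrDr !mulr_sumr.
  rewrite big_split /= exchange_big [X in _ + X]exchange_big /=.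
  congr (_ + _).
    rewrite natr_card_sum mulr_suml; apply: eq_bigr => v _.
    by rewrite bern_weight_mark.
  apply: eq_bigr => v; rewrite inE => /pred0P farv.
  rewrite bern_weight_avoid //; apply/subsetP => x xN; rewrite inE.
  by apply/negP => xS; have := farv x; rewrite /= xN xS.
have [f size_le_avg] :=
  exists_le_average size (bern_weight_ge0 (~: S) p01) (sum_bern_weight (~: S) p).
exists (marked f); rewrite -expected_bound; apply: (le_trans size_le_avg).
by apply: ler_sum => g _; apply: ler_wpM2l; [exact: bern_weight_ge0 | exact: size_le_bound].
Qed.
End RandomExtension.

Section LogBounds.
Local Open Scope R_scope.

Lemma ln_div_self_bounds (m : R) : 1 < m -> 0 < ln m / m < 1.
Proof.
move=> m_gt1.
have ln_pos : 0 < ln m by rewrite -ln_1; apply: ln_increasing; lra.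
have ln_lt : ln m < m by have := exp_ineq1_le (ln m); rewrite exp_ln; lra.
split; first by apply: Rdiv_lt_0_compat; lra.
apply: (Rmult_lt_reg_r m); first lra.
by rewrite /Rdiv Rmult_assoc Rinv_l; lra.
Qed.

(* 1 - x <= exp (-x) turns the power into exp (-k ln m / m) <= exp (- ln m). *)
Lemma one_sub_ln_div_pow_le (m : R) (k : nat) :
  1 < m -> m <= INR k -> (1 - ln m / m) ^ k <= / m.
Proof.
move=> m_gt1 m_le_k; have [p_pos p_lt1] := ln_div_self_bounds m_gt1.
set p := ln m / m in p_pos p_lt1 *.
have exp_pow : exp (- p) ^ k = exp (- (INR k * p)).
  rewrite -[LHS]exp_ln ?ln_pow ?ln_exp; [congr exp; ring | exact: exp_pos |].
  by apply: pow_lt; exact: exp_pos.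
have exp_at_m : exp (- (m * p)) = / m.
  by rewrite /p (_ : m * (ln m / m) = ln m) ?exp_Ropp ?exp_ln //; [lra | field; lra].
apply: (Rle_trans _ (exp (- p) ^ k)).
  by apply: pow_incr; have := exp_ineq1_le (- p); lra.
rewrite exp_pow -exp_at_m.
have [lt|->] := Rle_lt_or_eq_dec _ _ m_le_k; last exact: Rle_refl.
by apply/Rlt_le/exp_increasing; nra.
Qed.
End LogBounds.

Section ExtensionBound.
Local Open Scope ring_scope.
Variables (T : finType) (e : rel T) (delta : nat).
Hypotheses (e_sym : symmetric e) (e_irr : irreflexive e).
Hypotheses (min_deg : forall v, (delta <= degree e v)%nat) (delta_gt0 : (0 < delta)%nat).

Lemma exists_extension_bound (S : {set T}) u :
  u \in S -> (forall x, x \in S -> ~~ e u x) ->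
  exists X : {set T},
    (INR (#|X| + #|undominated e (S :|: X)|)
      <= INR #|~: S| * (ln (INR delta + 1) / (INR delta + 1))
         + INR (#|~: S| - delta) / (INR delta + 1))%R.
Proof.
move=> uS uNS; set m := (INR delta + 1)%R.
have m_gt1 : (1 < m)%R by have := le_INR 1 delta (ssrnat.leP delta_gt0); rewrite /m /=; lra.
have [p_pos p_lt1] := ln_div_self_bounds m_gt1.
have p01 : (0 <= ln m / m <= 1)%O by apply/andP; split; apply/RleP/Rlt_le.
have [X hX] := exists_small_undominated e_sym S p01.
exists X; apply/RleP; rewrite !INRE RplusE; apply: (le_trans hX); rewrite lerD2l.
apply: (le_trans (y := \sum_(v in far_from e S) m^-1)).
  apply: ler_sum => v _; apply/RleP; rewrite -RpowE -RinvE.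
  apply: one_sub_ln_div_pow_le => //.
  by rewrite card_closed_nbhd // S_INR /m; apply: Rplus_le_compat_r; apply/le_INR/ssrnat.leP.
rewrite sumr_const -[_ *+ _]mulr_natl; apply: ler_wpM2r.
  by rewrite invr_ge0; apply/RleP/Rlt_le/(Rlt_trans _ 1 _ Rlt_0_1 m_gt1).
rewrite ler_nat; have := card_far_from_le e_sym uS uNS; have := min_deg u; lia.
Qed.
End ExtensionBound.

Section Transversals.
Variables (T : finType) (e : rel T) (c : nat) (col : T -> 'I_c).

Lemma tropical_card_ge (D : {set T}) : tropical col D -> (c <= #|D|)%nat.
Proof.
move=> /forallP tropD; rewrite -[c]card_ord -cardsT.
apply: (leq_trans _ (leq_imset_card col D)); apply/subset_leq_card/subsetP => i _.
by have /existsP [v /andP [vD /eqP <-]] := tropD i; exact: imset_f.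
Qed.

Lemma tropical_subset (D D' : {set T}) :
  D \subset D' -> tropical col D -> tropical col D'.
Proof.
move=> /subsetP sDD' /forallP tropD; apply/forallP => i.
by have /existsP [v /andP [vD coli]] := tropD i; apply/existsP; exists v; rewrite sDD'.
Qed.

Lemma gamma_t_le_card (D : {set T}) : trop_dom e col D -> (gamma_t e col <= #|D|)%nat.
Proof.
move=> tdD; rewrite /gamma_t -minEnat.
exact: (bigmin_le_cond #|T| (fun A : {set T} => #|A|) tdD).
Qed.

Lemma gamma_t_ge : colouring_onto col -> (c <= gamma_t e col)%nat.
Proof.
move=> col_onto; rewrite /gamma_t; elim/big_ind: _ => [||D /andP [_]].
- rewrite -cardsT; apply: tropical_card_ge; apply/forallP => i; apply/existsP.
  by have [v <-] := col_onto i; exists v; rewrite in_setT eqxx.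
- by move=> x y cx cy; rewrite leq_min cx cy.
- exact: tropical_card_ge.
Qed.

Lemma exists_colour_section : colouring_onto col -> exists s : 'I_c -> T, cancel s col.
Proof.
move=> col_onto.
have exP i : exists v, col v == i by have [v <-] := col_onto i; exists v.
by exists (fun i => xchoose (exP i)) => i; apply/eqP; exact: (xchooseP (exP i)).
Qed.

Definition transversal (s : 'I_c -> T) : {set T} := [set s i | i : 'I_c].

Variable s : 'I_c -> T.
Hypothesis sK : cancel s col.

Lemma card_transversal : #|transversal s| = c.
Proof. by rewrite card_imset ?card_ord //; exact: can_inj sK. Qed.

Lemma tropical_transversal : tropical col (transversal s).
Proof. by apply/forallP => i; apply/existsP; exists (s i); rewrite imset_f //= sK. Qed.

Definition swap_section (u : T) (i : 'I_c) : T := if i == col u then u else s i.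

Lemma swap_sectionK u : cancel (swap_section u) col.
Proof. by move=> i; rewrite /swap_section; case: eqP. Qed.

Lemma mem_swap_section u : u \in transversal (swap_section u).
Proof. by apply/imsetP; exists (col u); rewrite // /swap_section eqxx. Qed.

Lemma swap_section_nonadjacent u :
  symmetric e -> irreflexive e -> ~~ [exists x in transversal s, e x u] ->
  forall x, x \in transversal (swap_section u) -> ~~ e u x.
Proof.
move=> e_sym e_irr /existsPn uNdom x /imsetP [i _ ->]; rewrite /swap_section.
case: eqP => _; first by rewrite e_irr.
by have := uNdom (s i); rewrite imset_f // e_sym.
Qed.
End Transversals.

Lemma connected_degree_gt0 (T : finType) (e : rel T) x y :
  graph_connected e -> x != y -> (0 < degree e x)%nat.
Proof.
move=> e_conn; case/connectP: (e_conn x y) => -[/= _ -> | z p /= /andP [exz _] _].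
  by rewrite eqxx.
by move=> _; rewrite /degree card_gt0; apply/set0Pn; exists z; rewrite inE.
Qed.

Section MainBound.
Local Open Scope R_scope.

Lemma gamma_t_lt_bound (T : finType) (e : rel T) (c : nat) (col : T -> 'I_c)
    (delta : nat) (s : 'I_c -> T) u :
  symmetric e -> irreflexive e ->
  (forall v, delta <= degree e v)%nat -> (0 < delta)%nat ->
  cancel s col -> u \in transversal s ->
  (forall x, x \in transversal s -> ~~ e u x) ->
  INR (gamma_t e col) <
    (1 + ln (INR delta + 1)) / (INR delta + 1) * (INR #|T| - INR c + 1)
    + INR c - 1.
Proof.
move=> e_sym e_irr min_deg delta_gt0 sK uS uNS.
have [X] := exists_extension_bound e_sym e_irr min_deg delta_gt0 uS uNS.
set S := transversal s; set U := undominated e (S :|: X) => bound_XU.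
have tdD : trop_dom e col (S :|: X :|: U).
  rewrite /trop_dom dominating_setU_undominated.
  by apply: tropical_subset (tropical_transversal sK); rewrite -setUA subsetUl.
have gamma_le : (gamma_t e col <= c + (#|X| + #|U|))%nat.
  apply: (leq_trans (gamma_t_le_card tdD)); rewrite -(card_transversal sK) addnA.
  by apply: (leq_trans (leq_card_setU _ _)); rewrite leq_add2r leq_card_setU.
have delta_le : (delta <= #|~: S|)%nat.
  exact: leq_trans (min_deg u) (leq_trans (leq_addl _ _) (card_far_from_le e_sym uS uNS)).
have card_T : #|T| = (c + #|~: S|)%nat by rewrite -(card_transversal sK) cardsC.
have m_gt1 : 1 < INR delta + 1.
  by have := le_INR 1 delta (ssrnat.leP delta_gt0); simpl; lra.
have [p_pos _] := ln_div_self_bounds m_gt1.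
move/ssrnat.leP/le_INR: gamma_le; move: p_pos bound_XU.
rewrite card_T minus_INR; last exact/ssrnat.leP.
rewrite !plus_INR; set m := INR delta + 1; set L := ln m.
have -> : (1 + L) / m * (INR c + INR #|~: S| - INR c + 1) + INR c - 1
   = INR c + (INR #|~: S| * (L / m) + (INR #|~: S| - INR delta) / m) + L / m.
  by rewrite /m; field; lra.
lra.
Qed.
End MainBound.

Theorem mainTheorem5 (T : finType) (e : rel T) (c : nat) (col : T -> 'I_c)
  (delta : nat)
  (Hsimple : simple_graph e) (Hconn : graph_connected e)
  (Hcol : colouring_onto col) (Hdelta : is_min_degree e delta) :
  gamma_t e col = c \/
  (INR (gamma_t e col) <
     (1 + ln (INR delta + 1)) / (INR delta + 1) * (INR #|T| - INR c + 1)
     + INR c - 1)%R.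
Proof.
case: Hsimple => e_sym e_irr; case: Hdelta => -[v0 deg_v0] min_deg.
have [s sK] := exists_colour_section Hcol.
have [S_dom|/forallPn [u]] := boolP (dominating e (transversal s)).
  left; apply/eqP; rewrite eqn_leq gamma_t_ge // andbT -{2}(card_transversal sK).
  by apply: gamma_t_le_card; rewrite /trop_dom S_dom tropical_transversal.
rewrite negb_or => /andP [uNS uNdom]; right.
have delta_gt0 : (0 < delta)%nat.
  have su_S : s (col u) \in transversal s by exact: imset_f.
  have [v0u|v0Nu] := eqVneq v0 u; last by rewrite -deg_v0 (connected_degree_gt0 Hconn v0Nu).
  have uNsu : u != s (col u) by apply: contraNneq uNS => ->.
  by rewrite -deg_v0 v0u (connected_degree_gt0 Hconn uNsu).
apply: (gamma_t_lt_bound e_sym e_irr min_deg delta_gt0 (swap_sectionK sK u)).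
  exact: mem_swap_section.
exact: swap_section_nonadjacent.
Qed.
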